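(* Let $n\ge1$ and $0\le k\le n-1$, and let $(\pi,S)\in\mathcal{B}^{>}_{n-1,k}$. Then (a) $\mathrm{fmaj}(\phi^{|}_{n,k}(i,(\pi,S)))=\mathrm{fmaj}((\pi,S))+2i$ for every $i\in\{0,1,\dots,n-k-1\}$; (b) $\mathrm{fmaj}(\phi^{|}_{\overline{n},k}(i,(\pi,S)))=\mathrm{fmaj}((\pi,S))+2i-1$ for every $i\in\{1,\dots,n-k-1\}$; (c) $\mathrm{fmaj}(\phi^{|}_{\overline{n},k}(0,(\pi,S)))=\mathrm{fmaj}((\pi,S))+2n-2k-1$.
   Context: $\mathcal{B}_m$ is the group of signed permutations of $[m]$ (bijections $\pi$ of $\{\pm1,\dots,\pm m\}$ with $\pi(-i)=-\pi(i)$, written $\pi=\pi_1\cdots\pi_m$), integers ordered naturally, $\overline{x}=-x$. Set $\pi_0=0$; $\mathrm{Des}_B(\pi)=\{i\in\{0,\dots,m-1\}:\pi_i>\pi_{i+1}\}$, $\mathrm{neg}(\pi)=|\{i:\pi_i<0\}|$, $\mathrm{fmaj}(\pi)=\sum_{i\in\mathrm{Des}_B(\pi)}2i+\mathrm{neg}(\pi)$. Let $\mathcal{B}^{>}_{m,k}=\{(\pi,S):\pi\in\mathcal{B}_m,\ S\subseteq\mathrm{Des}_B(\pi),\ |S|=k\}$ and for $(\pi,S)\in\mathcal{B}^{>}_{m,k}$, $\mathrm{fmaj}((\pi,S))=\mathrm{fmaj}(\pi)-\sum_{j\in S}\bigl(2|\mathrm{Des}_B(\pi)\cap\{j,\dots,m-1\}|-1\bigr)$.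 Positions: for $p\in\{0,1,\dots,m\}$, position $p$ of $\pi$ is the space immediately after $\pi_p$ (position $0$ is before $\pi_1$, position $m$ is at the end). The fmaj-labelling of $(\pi,S)\in\mathcal{B}^{>}_{m,k}$ labels the positions not in $S$ as follows: position $m$ gets label $0$; the positions in $\mathrm{Des}_B(\pi)\setminus S$ get labels $1,2,\dots$ in order from right to left (decreasing position); the remaining unlabelled positions in $\{0,\dots,m-1\}\setminus\mathrm{Des}_B(\pi)$ get the next consecutive labels in order from left to right. Thus the labels are $0,1,\dots,m-k$. Insertion: for $\alpha\in\{n,\overline{n}\}$ and $(\pi,S)\in\mathcal{B}^{>}_{n-1,k}$ and a label $i$, let $p$ be the position of $(\pi,S)$ with label $i$, and let $\tau=\pi_1\cdots\pi_p\,\alpha\,\pi_{p+1}\cdots\pi_{n-1}\in\mathcal{B}_n$. Starred positions $j\in S$ with $j<p$ remain starred at $j$; each starred position $j\in S$ with $j>p$ (which corresponds to the descent $j+1$ of $\tau$) is moved one descent to the left, i.e. replaced by the largest element of $\mathrm{Des}_B(\tau)$ smaller than $j+1$. Let $T$ be the resulting set of starred positions. Define $\phi^{|}_{\alpha,k}(i,(\pi,S))=(\tau,T)$, a map $\{0,1,\dots,n-k-1\}\times\mathcal{B}^{>}_{n-1,k}\to\mathcal{B}^{>}_{n,k}$. *)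

(* Signed permutations are represented by their window
   notation pi_1 ... pi_m as a sequence of (nonzero) integers. *)
From HB Require Import structures.
From mathcomp Require Import all_boot all_order all_algebra.
Set Implicit Arguments. Unset Strict Implicit. Unset Printing Implicit Defensive.
Import Order.TTheory GRing.Theory Num.Theory.

Local Open Scope ring_scope.

Definition is_signed_perm (m : nat) (s : seq int) : bool :=
  (size s == m) && perm_eq (map absz s) (iota 1 m).

(* pi_i, with the convention pi_0 = 0 *)
Definition pi_at (s : seq int) (i : nat) : int :=
  if i is j.+1 then nth 0 s j else 0.

Definition desB (s : seq int) : seq nat :=
  [seq i <- iota 0 (size s) | pi_at s i.+1 < pi_at s i].

Definition negB (s : seq int) : nat := count (fun x : int => x < 0) s.

Definition fmajB (s : seq int) : nat :=
  (\sum_(i <- desB s) i.*2 + negB s)%N.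

(* fmaj((pi,S)) = fmaj(pi) - sum_{j in S} (2 |Des_B(pi) cap {j,...,m-1}| - 1),
   computed in int; S is a finite set of naturals given by a list
   (duplicates are ignored). *)
Definition fmajP (s : seq int) (S : seq nat) : int :=
  (fmajB s)%:Z
  - \sum_(j <- undup S) ((2 * count (fun d => j <= d) (desB s))%N%:Z - 1).

Definition in_Bgt (m k : nat) (s : seq int) (S : seq nat) : Prop :=
  [/\ is_signed_perm m s, uniq S, {subset S <= desB s} & size S = k].

(* The positions not in S, listed in order of their fmaj-label:
   position m (label 0), then Des_B(pi)\S from right to left, then
   the non-descent positions of {0,...,m-1} from left to right. *)
Definition label_positions (s : seq int) (S : seq nat) : seq nat :=
  size s :: rev [seq p <- desB s | p \notin S]
         ++ [seq p <- iota 0 (size s) | p \notin desB s].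

Definition pos_of_label (s : seq int) (S : seq nat) (i : nat) : nat :=
  nth 0 (label_positions s S) i.

Definition phi_ins (alpha : int) (i : nat) (s : seq int) (S : seq nat)
  : seq int * seq nat :=
  let p := pos_of_label s S i in
  let tau := take p s ++ alpha :: drop p s in
  let move j := if (j < p)%N then j
                 else \max_(d <- desB tau | (d < j.+1)%N) d in
  (tau, undup [seq move j | j <- S]).

From mathcomp Require Import all_boot all_order all_algebra zify.
Import Order.TTheory GRing.Theory Num.Theory.

Set Implicit Arguments.
Unset Strict Implicit.
Unset Printing Implicit Defensive.

(* Inserting the extremal letter n (resp. -n) at position p changes the descent
   set only locally: descents left of p stay, a descent at p is destroyed, a new
   descent appears at p+1 (resp. p), descents right of p move one step right,
   and neg grows by one exactly for -n.  A starred descent right of p is moved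
   one descent left, so it sees exactly one more descent to its right; a
   starred descent left of p sees one more iff p was not a descent.  Summing
   up, fmaj grows by 2(r+1) - [-n] when p is an unstarred descent with r
   unstarred descents to its right, and by 2(|Des \ S| + a + 1) - [-n] when p
   is an ascent with a ascents to its left; the fmaj-labelling gives p exactly
   this label i, so both equal 2i - [-n].  Position m (label 0) leaves fmaj
   unchanged for n, and adds 2m + 1 - 2k for -n. *)

Lemma count_predIC (T : Type) (a b : pred T) (s : seq T) :
  count a s = (count (predI a b) s + count (predI a (predC b)) s)%N.
Proof. by elim: s => //= x s ->; case: (a x); case: (b x) => /=; lia. Qed.

Lemma count_mem_subset (T : eqType) (a : pred T) (A B : seq T) :
  uniq A -> uniq B -> {subset A <= B} ->
  count (predI a (mem A)) B = count a A.
Proof.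
move=> uA uB sAB; rewrite -count_filter; apply/permP/uniq_perm => //.
  exact: filter_uniq.
by move=> x; rewrite mem_filter; apply/andP/idP => [[]//|xA]; split => //; apply: sAB.
Qed.

Lemma count_lt_nth (T : Type) (r : rel T) (x0 : T) (s : seq T) j :
  irreflexive r -> transitive r -> sorted r s -> (j < size s)%N ->
  count (r^~ (nth x0 s j)) s = j.
Proof.
move=> irr tr; elim: s j => [|x s IH] j //= xs.
have x_lt : all (r x) s := order_path_min tr xs.
case: j => [|j] ltj /=.
  rewrite irr; apply/eqP; rewrite eqn0Ngt -has_count -all_predC.
  by apply: sub_all x_lt => y xy /=; apply/negP => yx; move: (tr _ _ _ yx xy); rewrite irr.
by rewrite (all_nthP x0 x_lt) // IH ?(path_sorted xs).
Qed.

Lemma bigmax_seq_mem (r : seq nat) (P : pred nat) : has P r ->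
  (\max_(i <- r | P i) i \in r) && P (\max_(i <- r | P i) i).
Proof.
elim: r => //= x r IH; rewrite big_cons.
case Px: (P x) => /=.
  2: by move=> hr; rewrite inE; case/andP: (IH hr) => -> ->; rewrite orbT.
move=> _; case hr: (has P r); last by rewrite big_hasC ?hr // maxn0 inE eqxx.
case/andP: (IH hr) => h1 h2; rewrite /maxn; case: ltnP => _.
  by rewrite inE h1 orbT h2.
by rewrite inE eqxx Px.
Qed.

Lemma count_ge_bigmax (D : seq nat) j : sorted ltn D -> has (fun d => d < j.+1) D ->
  count (fun d => \max_(d <- D | d < j.+1) d <= d) D = (count (fun d => j < d) D).+1.
Proof.
move=> sD hD; set mu := \max_(d <- D | d < j.+1) d.
case/andP: (bigmax_seq_mem hD); rewrite -/mu => muD mu_j.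
have le_mu d : d \in D -> d <= j -> d <= mu by move=> dD dj; apply: leq_bigmax_seq.
have uD : uniq D := sorted_uniq ltn_trans ltnn sD.
rewrite (count_predIC _ (pred1 mu)) (@eq_count _ _ (pred1 mu)); last first.
  by move=> d /=; case: eqP => [->|]; rewrite ?leqnn ?andbF.
rewrite (count_uniq_mem _ uD) muD add1n; congr _.+1.
apply: eq_in_count => d dD /=; rewrite andbC eq_sym -ltn_neqAle.
apply/idP/idP => [mu_d|]; last exact: leq_ltn_trans.
by rewrite ltnNge; apply/negP => /(le_mu _ dD); rewrite leqNgt mu_d.
Qed.

Lemma count_lt_gt (r : seq nat) p : p \notin r ->
  count (fun d => p < d) r + count (fun d => d < p) r = size r.
Proof.
move=> pr; rewrite -(count_predC (fun d => p < d)); congr addn.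
apply: eq_in_count => d dr /=; have : d != p by apply: contraNneq pr => <-.
lia.
Qed.

Lemma count_mem_subset_size (T : eqType) (A B : seq T) :
  uniq A -> uniq B -> {subset A <= B} -> count (mem A) B = size A.
Proof. by move=> uA uB sAB; rewrite -(count_predT A) -(count_mem_subset predT uA uB sAB). Qed.

Lemma sum_nat_count (T : Type) (a : pred T) (r : seq T) :
  \sum_(x <- r) (a x : nat) = count a r.
Proof. by rewrite -sumn_count sumnE big_map. Qed.

Definition desc_at (s : seq int) (i : nat) : bool := (pi_at s i.+1 < pi_at s i)%R.

Lemma desBE s : desB s = filter (desc_at s) (iota 0 (size s)).
Proof. by []. Qed.

Lemma sorted_desB s : sorted ltn (desB s).
Proof. exact: (sorted_filter ltn_trans _ (iota_ltn_sorted 0 _)). Qed.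

Lemma mem_desB s d : (d \in desB s) = (d < size s) && desc_at s d.
Proof. by rewrite mem_filter mem_iota andbC. Qed.

Lemma uniq_desB s : uniq (desB s).
Proof. exact: (sorted_uniq ltn_trans ltnn (sorted_desB s)). Qed.

Lemma size_desB_le s : size (desB s) <= size s.
Proof. by rewrite size_filter -[leqRHS](size_iota 0) count_size. Qed.

Lemma desB_sub_iota s : {subset desB s <= iota 0 (size s)}.
Proof. by move=> d; rewrite mem_filter => /andP[]. Qed.

Definition free_descents (s : seq int) (S : seq nat) : seq nat :=
  [seq p <- desB s | p \notin S].

Definition ascents (s : seq int) : seq nat :=
  [seq p <- iota 0 (size s) | p \notin desB s].

Lemma size_free_descents (s : seq int) (S : seq nat) : uniq S -> {subset S <= desB s} ->
  size (free_descents s S) = size (desB s) - size S.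
Proof.
move=> uS sS; rewrite size_filter -(count_mem_subset_size uS (uniq_desB s) sS).
by rewrite -(count_predC (mem S) (desB s)) addKn.
Qed.

Lemma size_ascents s : size (ascents s) = size s - size (desB s).
Proof.
rewrite size_filter -(count_mem_subset_size (uniq_desB s) (iota_uniq 0 _) (@desB_sub_iota s)).
by rewrite -{2}(size_iota 0 (size s)) -(count_predC (mem (desB s))) addKn.
Qed.

Lemma count_desB_ascents_lt s p : p <= size s ->
  count (fun d => d < p) (desB s) + count (fun d => d < p) (ascents s) = p.
Proof.
move=> ps; rewrite /ascents !count_filter.
rewrite (@eq_in_count _ (predI _ (fun d => d \notin desB s))
                        (predI (fun d => d < p) (predC (desc_at s)))); last first.
  by move=> d; rewrite mem_iota add0n => /andP[_ dlt] /=; rewrite mem_desB dlt.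
by rewrite -count_predIC -size_filter (filter_iota_ltn 0 ps) size_iota.
Qed.

Lemma pos_of_label_free s S i (p := pos_of_label s S i) :
  0 < i <= size (free_descents s S) ->
  p \in free_descents s S /\ count (fun d => p < d) (free_descents s S) = i.-1.
Proof.
case: i @p => // i p /= lti.
have ltir : i < size (rev (free_descents s S)) by rewrite size_rev.
have -> : p = nth 0 (rev (free_descents s S)) i by rewrite /p /pos_of_label /= nth_cat ltir.
split; first by rewrite -mem_rev mem_nth.
rewrite -count_rev (count_lt_nth (r := fun x y => y < x)) //.
- by move=> x /=; rewrite ltnn.
- by move=> x y z yx zy; apply: ltn_trans zy yx.
- by rewrite rev_sorted (sorted_filter ltn_trans _ (sorted_desB s)).
Qed.

Lemma pos_of_label_ascent s S i (p := pos_of_label s S i) :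
  size (free_descents s S) < i <= size (free_descents s S) + size (ascents s) ->
  p \in ascents s /\ count (fun d => d < p) (ascents s) = i.-1 - size (free_descents s S).
Proof.
case: i @p => // i p /andP[]; rewrite ltnS => leFi ltiA.
have ltj : i - size (free_descents s S) < size (ascents s) by lia.
have -> : p = nth 0 (ascents s) (i - size (free_descents s S)).
  by rewrite /p /pos_of_label /= nth_cat size_rev ltnNge leFi.
split; first exact: mem_nth.
apply: (count_lt_nth _ ltnn ltn_trans) => //.
exact: (sorted_filter ltn_trans _ (iota_ltn_sorted 0 _)).
Qed.

Definition insert_at (p : nat) (x : int) (s : seq int) : seq int :=
  take p s ++ x :: drop p s.

Definition shift_star (tau : seq int) (p j : nat) : nat :=
  if j < p then j else \max_(d <- desB tau | d < j.+1) d.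

Lemma phi_insE al i s S : let p := pos_of_label s S i in
  phi_ins al i s S =
  (insert_at p al s, undup [seq shift_star (insert_at p al s) p j | j <- S]).
Proof. by []. Qed.

Lemma size_insert_at p x s : p <= size s -> size (insert_at p x s) = (size s).+1.
Proof. by move=> hp; rewrite size_cat /= size_take_min size_drop; lia. Qed.

Section PiAtInsert.
Variables (p : nat) (x : int) (s : seq int).
Hypothesis p_le : p <= size s.

Lemma pi_at_insert i :
  pi_at (insert_at p x s) i =
  if i <= p then pi_at s i else if i == p.+1 then x else pi_at s i.-1.
Proof.
case: i => [|j] //=.
rewrite nth_cat size_take_min (minn_idPl p_le) eqSS.
case: (ltnP j p) => hj; first by rewrite nth_take.
case: (eqVneq j p) => [->|hjp]; first by rewrite subnn.
have -> : j - p = (j - p).-1.+1 by lia.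
by rewrite /= nth_drop; case: j hj hjp => [|j] hj hjp /=; [lia | congr nth; lia].
Qed.

Lemma pi_at_insert_le i : i <= p -> pi_at (insert_at p x s) i = pi_at s i.
Proof. by move=> hi; rewrite pi_at_insert hi. Qed.

Lemma pi_at_insert_new : pi_at (insert_at p x s) p.+1 = x.
Proof. by rewrite pi_at_insert ltnn eqxx. Qed.

Lemma pi_at_insert_gt i : p.+1 < i -> pi_at (insert_at p x s) i = pi_at s i.-1.
Proof. by move=> hi; rewrite pi_at_insert !ifN //; lia. Qed.

End PiAtInsert.

Section Insertion.
Variables (s : seq int) (al : int) (lo : bool) (S : seq nat).
Hypothesis al_lt : forall i, (al < pi_at s i)%R = lo.
Hypothesis lt_al : forall i, (pi_at s i < al)%R = ~~ lo.
Hypothesis S_uniq : uniq S.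
Hypothesis S_sub : {subset S <= desB s}.

Let size_S_le : size S <= size (desB s).
Proof. by rewrite -(count_mem_subset_size S_uniq (uniq_desB s) S_sub) count_size. Qed.

Lemma negB_insert p : negB (insert_at p al s) = negB s + lo.
Proof.
(* As pi_0 = 0, [al_lt 0] says that al is negative exactly when lo holds. *)
rewrite /negB count_cat /= -(al_lt 0) /=.
by rewrite -{3}(cat_take_drop p s) count_cat; lia.
Qed.

Lemma desB_insert_end :
  desB (insert_at (size s) al s) = desB s ++ (if lo then [:: size s] else [::]).
Proof.
rewrite desBE size_insert_at // -addn1 iotaD filter_cat /= add0n.
have /eq_in_filter-> : {in iota 0 (size s),
    desc_at (insert_at (size s) al s) =1 desc_at s}.
  by move=> x; rewrite mem_iota => hx; rewrite /desc_at !pi_at_insert_le //; lia.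
have -> : desc_at (insert_at (size s) al s) (size s) = lo.
  by rewrite /desc_at pi_at_insert_new // pi_at_insert_le.
by case: lo.
Qed.

Section Interior.
Variable p : nat.
Hypothesis p_lt : p < size s.
Hypothesis p_notin_S : p \notin S.
Let tau := insert_at p al s.
Let L := filter (desc_at s) (iota 0 p).
Let R := filter (desc_at s) (iota p.+1 (size s - p.+1)).

Lemma desB_split : desB s = L ++ (if desc_at s p then [:: p] else [::]) ++ R.
Proof.
rewrite desBE (_ : size s = p + (1 + (size s - p.+1))); last by lia.
rewrite !iotaD !filter_cat /= add0n addn1.
by case: (desc_at s p); congr (_ ++ _); rewrite /R; congr (filter _ (iota _ _)); lia.
Qed.

Lemma desB_insert : desB tau = L ++ (p + ~~ lo) :: map succn R.
Proof.
have hp := ltnW p_lt.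
rewrite desBE size_insert_at //.
rewrite (_ : (size s).+1 = p + (1 + (1 + (size s - p.+1)))); last by lia.
rewrite !iotaD !filter_cat /= add0n.
have -> : filter (desc_at tau) (iota 0 p) = L.
  apply: eq_in_filter => x; rewrite mem_iota => hx.
  by rewrite /desc_at !pi_at_insert_le //; lia.
have -> : desc_at tau p = lo by rewrite /desc_at pi_at_insert_new // pi_at_insert_le.
have -> : desc_at tau (p + 1) = ~~ lo.
  by rewrite /desc_at pi_at_insert_gt ?addn1 // pi_at_insert_new.
have -> : filter (desc_at tau) (iota (p + 1 + 1) (size s - p.+1)) = map succn R.
  rewrite (_ : p + 1 + 1 = 1 + p.+1); last by lia.
  rewrite iotaDl filter_map (eq_map add1n); congr map.
  apply: eq_in_filter => x; rewrite mem_iota => hx.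
  by rewrite /= /desc_at !pi_at_insert_gt //; lia.
by case: lo; rewrite /= ?addn1 ?addn0.
Qed.

Let L_lt x : x \in L -> x < p.
Proof. by rewrite mem_filter mem_iota => /andP[_ /andP[_]]. Qed.

Let R_gt x : x \in R -> p < x.
Proof. by rewrite mem_filter mem_iota => /andP[_ /andP[]]. Qed.

Lemma count_desB_insert_lt j : j < p ->
  count (fun d => j <= d) (desB tau) =
  count (fun d => j <= d) (desB s) + ~~ desc_at s p.
Proof.
move=> jp; rewrite desB_split desB_insert !count_cat /= count_map.
rewrite (@eq_in_count _ (preim succn _) (fun d => j <= d) R); last first.
  by move=> x /R_gt /=; lia.
have [jp' je] : j <= p /\ j <= p + ~~ lo by lia.
by case: (desc_at s p); rewrite /= ?jp' je /=; lia.
Qed.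

Lemma count_desB_insert_gt j : p < j ->
  count (fun d => shift_star tau p j <= d) (desB tau) =
  (count (fun d => j <= d) (desB s)).+1.
Proof.
move=> pj; rewrite /shift_star ltnNge (ltnW pj) /= count_ge_bigmax ?sorted_desB //;
  last by apply/hasP; exists (p + ~~ lo);
          rewrite ?desB_insert ?mem_cat ?inE ?eqxx ?orbT //; lia.
congr _.+1; rewrite desB_split desB_insert !count_cat /= count_map.
rewrite !(@eq_in_count _ _ pred0 L) ?count_pred0; try by move=> x /L_lt /=; lia.
rewrite (@eq_count _ (preim succn _) (fun d => j <= d)) //.
have [pj' je] : j <= p = false /\ j < p + ~~ lo = false by lia.
by case: (desc_at s p); rewrite /= ?pj' je.
Qed.

Lemma shift_star_le j : shift_star tau p j <= j.
Proof.
rewrite /shift_star; case: ifP => // _.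
by apply/bigmax_leqP_seq => d _; rewrite ltnS.
Qed.

Lemma shift_star_gt j1 j2 : j1 \in S -> j2 \in S -> j1 < j2 ->
  j1 < shift_star tau p j2.
Proof.
move=> j1S j2S j12; rewrite /shift_star; case: ifP => // /negbT; rewrite -leqNgt => pj2.
have ne_p j : j \in S -> j != p by move=> jS; apply: contraNneq p_notin_S => <-.
have {}pj2 : p < j2 by rewrite ltn_neqAle eq_sym ne_p.
case: (ltnP j1 p) => pj1.
  apply: (@leq_trans (p + ~~ lo)); first lia.
  by apply: leq_bigmax_seq; rewrite ?desB_insert ?mem_cat ?inE ?eqxx ?orbT //; lia.
have {}pj1 : p < j1 by rewrite ltn_neqAle eq_sym ne_p.
have j1R : j1 \in R.
  move: (S_sub j1S); rewrite desB_split !mem_cat => /or3P[/L_lt|//|//]; first lia.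
  by case: (desc_at s p); rewrite ?inE // => /eqP; lia.
apply: (@leq_bigmax_seq _ _ _ (fun d => d) j1.+1) => //.
by rewrite desB_insert mem_cat inE (map_f succn j1R) !orbT.
Qed.

Lemma shift_star_inj : {in S &, injective (shift_star tau p)}.
Proof.
move=> j1 j2 j1S j2S e12; case: (ltngtP j1 j2) => // lt12.
  by move: (shift_star_gt j1S j2S lt12) (shift_star_le j1); rewrite e12; lia.
by move: (shift_star_gt j2S j1S lt12) (shift_star_le j2); rewrite e12; lia.
Qed.

Lemma fmajB_insert :
  fmajB tau + desc_at s p * p.*2 =
  fmajB s + 2 * (p + ~~ lo) + 2 * count (fun d => p < d) (desB s) + lo.
Proof.
have sum_succ : \sum_(d <- map succn R) d.*2 = \sum_(d <- R) d.*2 + 2 * size R.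
  by rewrite big_map -[size R]sum1_size big_distrr -big_split; apply: eq_bigr => d _ /=; lia.
have -> : count (fun d => p < d) (desB s) = size R.
  rewrite desB_split !count_cat (@eq_in_count _ _ pred0 L) ?count_pred0;
    last by move=> x /L_lt /=; lia.
  rewrite (@eq_in_count _ _ predT R) ?count_predT; last by move=> x /R_gt.
  by case: (desc_at s p); rewrite /= ?ltnn.
rewrite /fmajB negB_insert desB_split desB_insert !big_cat big_cons sum_succ.
by case: (desc_at s p); case: lo; rewrite /= ?big_cons ?big_nil /=; lia.
Qed.

Lemma fmajP_insert :
  fmajP tau (undup [seq shift_star tau p j | j <- S]) =
  (fmajP s S + (2 * (p + ~~ lo + count (fun d => p < d) (desB s)) + lo)%N%:Z
   - (2 * ((if p \in desB s then p else count (fun j => j < p) S)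
           + count (fun j => p < j) S))%N%:Z)%R.
Proof.
set delta := fun j => ~~ desc_at s p * (j < p) + (p < j).
have shift j : j \in S -> count (fun d => shift_star tau p j <= d) (desB tau) =
                          count (fun d => j <= d) (desB s) + delta j.
  move=> jS; rewrite /delta; case: ltngtP => [jp|pj|jp].
  - by rewrite /shift_star jp count_desB_insert_lt // muln1 addn0.
  - by rewrite count_desB_insert_gt // muln0 add0n addn1.
  - by move: p_notin_S; rewrite -jp jS.
have sum_delta : \sum_(j <- S) delta j =
    ~~ desc_at s p * count (fun j => j < p) S + count (fun j => p < j) S.
  by rewrite big_split -big_distrr /= !sum_nat_count.
have T_uniq : uniq [seq shift_star tau p j | j <- S].
  by rewrite map_inj_in_uniq //; exact: shift_star_inj.
rewrite /fmajP !undup_id // big_map.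
rewrite (eq_big_seq (fun j => ((2 * count (fun d => j <= d) (desB s))%N%:Z - 1)
                              + (2 * delta j)%N%:Z)%R); last by move=> j /shift ->; lia.
rewrite big_split /=.
have -> : (\sum_(j <- S) (2 * delta j)%N%:Z = (2 * \sum_(j <- S) delta j)%N%:Z)%R.
  by rewrite big_distrr (big_morph Posz PoszD (erefl (Posz 0))).
rewrite sum_delta mem_desB p_lt /=.
have := fmajB_insert.
move: (fmajB tau) (fmajB s) (\sum_(j <- S) _)%R => X Y Z.
by case: (desc_at s p); case: lo => /=; lia.
Qed.

End Interior.

Lemma fmajP_insert_end (tau := insert_at (size s) al s) :
  fmajP tau (undup [seq shift_star tau (size s) j | j <- S]) =
  (fmajP s S + (lo * (2 * size s).+1)%N%:Z - (2 * lo * size S)%N%:Z)%R.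
Proof.
have -> : [seq shift_star tau (size s) j | j <- S] = S.
  rewrite -[RHS]map_id; apply/eq_in_map => j /S_sub.
  by rewrite /shift_star mem_desB => /andP[->].
have shift j : j \in S ->
    count (fun d => j <= d) (desB tau) = count (fun d => j <= d) (desB s) + lo.
  move=> /S_sub; rewrite mem_desB desB_insert_end count_cat => /andP[js _].
  by case: lo; rewrite /= ?(ltnW js).
rewrite /fmajP !undup_id //.
rewrite (eq_big_seq (fun j => ((2 * count (fun d => j <= d) (desB s))%N%:Z - 1)
                              + (2 * lo)%N%:Z)%R); last by move=> j /shift ->; lia.
rewrite big_split /=.
have -> : (\sum_(j <- S) (2 * lo)%N%:Z = (2 * lo * size S)%N%:Z)%R.
  rewrite -sum1_size big_distrr (big_morph Posz PoszD (erefl (Posz 0))).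
  by apply: eq_bigr => j _ /=; rewrite muln1.
have -> : fmajB tau = fmajB s + lo * (2 * size s).+1.
  rewrite /fmajB negB_insert desB_insert_end big_cat.
  by case: lo; rewrite /= ?big_cons ?big_nil /=; lia.
move: (fmajB s) (\sum_(j <- S) _)%R => X Y; lia.
Qed.

Lemma fmajP_insert_free p (tau := insert_at p al s) : p \in free_descents s S ->
  fmajP tau (undup [seq shift_star tau p j | j <- S]) =
  (fmajP s S + (2 * (count (fun d => p < d) (free_descents s S)).+1 - lo)%N%:Z)%R.
Proof.
move=> pF; move: (pF); rewrite mem_filter => /andP[pS pD].
have p_lt : p < size s by move: pD; rewrite mem_desB => /andP[].
rewrite fmajP_insert // pD.
rewrite (count_predIC _ (mem S)) (count_mem_subset _ S_uniq (uniq_desB s) S_sub).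
rewrite -count_filter; move: (count _ S) (count _ (filter _ _)) => X Y.
by case: lo => /=; lia.
Qed.

Lemma fmajP_insert_ascent p (tau := insert_at p al s) : p \in ascents s ->
  fmajP tau (undup [seq shift_star tau p j | j <- S]) =
  (fmajP s S + (2 * (size (free_descents s S)
                     + count (fun d => d < p) (ascents s)).+1 - lo)%N%:Z)%R.
Proof.
rewrite mem_filter mem_iota => /andP[pD /andP[_ p_lt]].
have pS : p \notin S by apply: contra pD; apply: S_sub.
rewrite fmajP_insert // (negbTE pD) size_free_descents //.
have := size_S_le; have := count_desB_ascents_lt (ltnW p_lt); have := count_lt_gt pD.
have := count_lt_gt pS; move: (count _ (desB s)) (count _ (desB s)).
move: (count _ S) (count _ S) (count _ (ascents s)) => X1 X2 X3 X4 X5.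
by case: lo => /=; lia.
Qed.

Lemma fmajP_phi_ins_label i : 0 < i <= size s - size S ->
  fmajP (phi_ins al i s S).1 (phi_ins al i s S).2 = (fmajP s S + (2 * i - lo)%N%:Z)%R.
Proof.
move=> /andP[i_pos i_le]; rewrite phi_insE /=.
case: (leqP i (size (free_descents s S))) => iF.
  have [pF cnt] := pos_of_label_free (introT andP (conj i_pos iF)).
  by rewrite fmajP_insert_free // cnt prednK.
have Ds := size_desB_le s.
have iFA : i <= size (free_descents s S) + size (ascents s).
  by rewrite size_free_descents // size_ascents; move: size_S_le; lia.
have [pA cnt] := pos_of_label_ascent (introT andP (conj iF iFA)).
by rewrite fmajP_insert_ascent // cnt; congr (_ + Posz _)%R; lia.
Qed.

Lemma fmajP_phi_ins_0 :
  fmajP (phi_ins al 0 s S).1 (phi_ins al 0 s S).2 =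
  (fmajP s S + (lo * (2 * size s).+1)%N%:Z - (2 * lo * size S)%N%:Z)%R.
Proof. exact: fmajP_insert_end. Qed.

End Insertion.

Lemma signed_perm_pi_at_bound n s i : 0 < n -> is_signed_perm n.-1 s ->
  (- n%:Z < pi_at s i < n%:Z)%R.
Proof.
move=> n_pos /andP[_ hp]; suff : (`|pi_at s i| < n)%N by lia.
case: i => [|j] //=; case: (ltnP j (size s)) => js; last by rewrite nth_default.
have : `|nth 0%R s j| \in iota 1 n.-1 by rewrite -(perm_mem hp) map_f ?mem_nth.
by rewrite mem_iota add1n prednK // => /andP[].
Qed.

Local Open Scope ring_scope.

Theorem lemma2p5 (n k : nat) (s : seq int) (S : seq nat) :
  (1 <= n)%N -> (k <= n.-1)%N -> in_Bgt n.-1 k s S ->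
  [/\ (forall i : nat, (i <= n - k - 1)%N ->
         fmajP (phi_ins (n%:Z) i s S).1 (phi_ins (n%:Z) i s S).2
         = fmajP s S + (2 * i)%N%:Z),
      (forall i : nat, (1 <= i)%N -> (i <= n - k - 1)%N ->
         fmajP (phi_ins (- n%:Z) i s S).1 (phi_ins (- n%:Z) i s S).2
         = fmajP s S + (2 * i)%N%:Z - 1)
    & fmajP (phi_ins (- n%:Z) 0 s S).1 (phi_ins (- n%:Z) 0 s S).2
         = fmajP s S + (2 * n - 2 * k)%N%:Z - 1].
Proof.
move=> n_pos k_le [sp S_uniq S_sub S_size].
have size_s : size s = n.-1 by case/andP: sp => /eqP.
have bound i := signed_perm_pi_at_bound i n_pos sp.
have n_lt i : (n%:Z < pi_at s i) = false by have := bound i; lia.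
have lt_n i : (pi_at s i < n%:Z) = ~~ false by have := bound i; lia.
have negn_lt i : (- n%:Z < pi_at s i) = true by have := bound i; lia.
have lt_negn i : (pi_at s i < - n%:Z) = ~~ true by have := bound i; lia.
have labels : (n - k - 1 = size s - size S)%N by rewrite size_s S_size; lia.
split.
- move=> i; rewrite labels; case: (posnP i) => [->|i_pos] i_le.
    by rewrite (fmajP_phi_ins_0 n_lt lt_n S_uniq S_sub) /=; lia.
  by rewrite (fmajP_phi_ins_label n_lt lt_n S_uniq S_sub) ?i_pos //=; lia.
- move=> i i_pos; rewrite labels => i_le.
  by rewrite (fmajP_phi_ins_label negn_lt lt_negn S_uniq S_sub) ?i_pos //=; lia.
- by rewrite (fmajP_phi_ins_0 negn_lt lt_negn S_uniq S_sub) size_s S_size /=; lia.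
Qed.
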